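(* Let $\widehat{\mathcal H}=\mathcal H^{even}\oplus\mathcal H^{odd}$ be a $\mathbb Z_2$-graded Hilbert space with grading operator $\epsilon=\begin{pmatrix}1&0\\0&-1\end{pmatrix}$, and let $\omega$ be a unitary element of the $C^*$-algebra $C^*(\mathbf 1,\epsilon)\subseteq\mathcal B(\widehat{\mathcal H})$ generated by the identity and $\epsilon$. For $x\in\mathcal B(\widehat{\mathcal H})$ put $x^{\omega}:=\omega\,\overline{x}\,\omega$, where $\overline x$ denotes the ordinary Hilbert space adjoint of $x$; call $x$ $\omega$-hermitian if $x^\omega=x$. Then $x$ is $\omega$-hermitian with $\Vert x\Vert\le 1$ if and only if $$\Vert x-it\,\omega\Vert\le\sqrt{1+t^2}\quad\text{for every } t\in\mathbb R.$$
   Context: $C^*(\mathbf 1,\epsilon)\cong\mathbb C\oplus\mathbb C$, so a unitary $\omega$ in it has the form $\omega=\begin{pmatrix}\omega_0&0\\0&\omega_1\end{pmatrix}$ with $\omega_0,\omega_1$ complex numbers of modulus one (times the identity on the respective summand). *)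

From HB Require Import structures.
From mathcomp Require Import all_boot all_order all_algebra.
From mathcomp Require Import reals.
From mathcomp Require Export complex.
Set Implicit Arguments. Unset Strict Implicit. Unset Printing Implicit Defensive.
Import Order.TTheory GRing.Theory Num.Theory.
Local Open Scope ring_scope.
Local Open Scope complex_scope.

Section Hilbert.
Variable R : realType.
Local Notation C := R[i].
Variable H : lmodType C.
Variable ip : H -> H -> C.   (* inner product, linear in the first argument *)

Definition normH (u : H) : R := Num.sqrt (@complex.Re R (ip u u)).

Definition is_inner_product : Prop :=
  [/\ (forall (a : C) (u v w : H), ip (a *: u + v) w = a * ip u w + ip v w),
      (forall u v : H, ip v u = (ip u v)^*),
      (forall u : H, 0 <= @complex.Re R (ip u u)) &
      (forall u : H, @complex.Re R (ip u u) = 0 -> u = 0)].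

Definition ip_complete : Prop :=
  forall s : nat -> H,
    (forall e : R, 0 < e -> exists N : nat, forall m n : nat,
        (N <= m)%N -> (N <= n)%N -> normH (s m - s n) < e) ->
    exists l : H, forall e : R, 0 < e -> exists N : nat, forall n : nat,
        (N <= n)%N -> normH (s n - l) < e.

Definition is_hilbert : Prop := is_inner_product /\ ip_complete.

Definition is_linear (x : H -> H) : Prop :=
  forall (a : C) (u v : H), x (a *: u + v) = a *: x u + x v.

(* ||x|| <= c for the operator norm (unfolded: ||x u|| <= c ||u|| for all u) *)
Definition opnorm_le (x : H -> H) (c : R) : Prop :=
  forall u : H, normH (x u) <= c * normH u.

Definition is_bounded (x : H -> H) : Prop :=
  is_linear x /\ exists c : R, opnorm_le x c.

Definition is_adjoint (x y : H -> H) : Prop :=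
  forall u v : H, ip (x u) v = ip u (y v).

(* eps is a grading operator: bounded, self-adjoint, eps^2 = 1, i.e.
   eps = diag(1,-1) w.r.t. H = H^even (+) H^odd (its +-1 eigenspaces) *)
Definition is_grading (eps : H -> H) : Prop :=
  [/\ is_bounded eps, is_adjoint eps eps & forall u, eps (eps u) = u].

(* membership in C*(1, eps) = span{1, eps} (eps^2 = 1, eps* = eps) *)
Definition in_Cstar_1_eps (eps w : H -> H) : Prop :=
  exists a b : C, forall u, w u = a *: u + b *: eps u.

Definition is_unitary_op (w : H -> H) : Prop :=
  is_bounded w /\ exists w' : H -> H,
    [/\ is_adjoint w w', (forall u, w (w' u) = u) & (forall u, w' (w u) = u)].

End Hilbert.

From HB Require Import structures.
From mathcomp Require Import all_boot all_order all_algebra.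
From mathcomp Require Import reals complex.
From mathcomp Require Import ring lra.
Set Implicit Arguments. Unset Strict Implicit. Unset Printing Implicit Defensive.
Import Order.TTheory GRing.Theory Num.Theory.
Local Open Scope ring_scope.
Local Open Scope complex_scope.

(* Writing B(u, v) := <x u, omega v>, one has
   ||x u - i t omega u||^2 = ||x u||^2 - 2 t Im B(u, u) + t^2 ||u||^2
   since omega is an isometry.  The bound by (1 + t^2) ||u||^2 for all t is
   thus the bound ||x u||^2 - 2 t Im B(u, u) <= ||u||^2 for all t, i.e.
   ||x|| <= 1 together with Im B(u, u) = 0.  By polarization the latter says
   that B is hermitian, and B(u, v) = conj B(v, u) unfolds to x = omega xbar omega. *)

Lemma affine_bounded_slope0 (R : realFieldType) (p m q : R) :
  (forall t : R, p - 2 * t * m <= q) -> m = 0.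
Proof.
move=> bounded; apply/eqP/negP => m_neq0.
have := bounded (- (q - p + 1) / (2 * m)).
have -> : 2 * (- (q - p + 1) / (2 * m)) * m = - (q - p + 1).
  by field; apply/negP.
lra.
Qed.

Section Sesquilinear.
Variable R : realType.
Local Notation C := R[i].
Variable H : lmodType C.

Lemma sesquilinear_hermitian (B : H -> H -> C) :
  (forall a u v w, B (a *: u + v) w = a * B u w + B v w) ->
  (forall a u v w, B u (a *: v + w) = a^* * B u v + B u w) ->
  (forall u, complex.Im (B u u) = 0) ->
  forall u v, B u v = (B v u)^*.
Proof.
move=> BlinL BlinR real_diag u v.
have := real_diag ((Complex 1 0) *: u + v).
have := real_diag ('i *: u + v).
have := real_diag u; have := real_diag v.
rewrite !BlinL !BlinR.
case: (B u u) => a1 a2; case: (B u v) => b1 b2.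
case: (B v u) => c1 c2; case: (B v v) => d1 d2.
simpc => /= e1 e2 e3 e4.
by apply/eqP; rewrite eq_complex /=; apply/andP; split; apply/eqP; lra.
Qed.

End Sesquilinear.

Section InnerProduct.
Variable R : realType.
Local Notation C := R[i].
Variables (H : lmodType C) (ip : H -> H -> C).
Hypothesis ip_inner : is_inner_product ip.

Lemma ipDr u a v w : ip u (a *: v + w) = a^* * ip u v + ip u w.
Proof.
case: ip_inner => ipDl ip_sym _ _.
by rewrite ip_sym ipDl rmorphD rmorphM /= -!ip_sym.
Qed.

Lemma ip_injr (y z : H) : (forall u, ip u y = ip u z) -> y = z.
Proof.
case: ip_inner => _ _ _ ip_def eq_yz.
have d_self0 : ip (y - z) (y - z) = 0.
  by rewrite addrC -scaleN1r ipDr eq_yz rmorphN1 mulN1r addNr.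
by apply/eqP; rewrite -subr_eq0; apply/eqP/ip_def; rewrite d_self0.
Qed.

Lemma Re_ip_sub_iscale (a b : H) (t : R) :
  let v := a - (Complex 0 1 * t%:C) *: b in
  complex.Re (ip v v) = complex.Re (ip a a) - 2 * t * complex.Im (ip a b)
                        + t ^+ 2 * complex.Re (ip b b).
Proof.
case: ip_inner => ipDl ip_sym _ _ /=.
rewrite addrC -scaleNr ipDr !ipDl (ip_sym a b).
move: (ip a a) (ip a b) (ip b b) => [p1 p2] [z1 z2] [q1 q2].
by rewrite -complexr0; simpc => /=; ring.
Qed.

Lemma normH_le_sqrt (v u : H) (c : R) : 0 <= c ->
  (normH ip v <= Num.sqrt c * normH ip u)
  = (complex.Re (ip v v) <= c * complex.Re (ip u u)).
Proof.
case: ip_inner => _ _ ip_pos _ c_ge0.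
by rewrite /normH -sqrtrM // ler_sqrt // mulr_ge0.
Qed.

Lemma opnorm_le1P (x : H -> H) :
  opnorm_le ip x 1 <-> forall u, complex.Re (ip (x u) (x u)) <= complex.Re (ip u u).
Proof.
split=> bound u; have := bound u; rewrite -{1}sqrtr1 normH_le_sqrt //;
  by rewrite mul1r.
Qed.

End InnerProduct.

Lemma adjoint_cancel_isometry (R : realType) (H : lmodType R[i])
    (ip : H -> H -> R[i]) (w w' : H -> H) :
  is_adjoint ip w w' -> cancel w w' -> forall u v, ip (w u) (w v) = ip u v.
Proof. by move=> w_adj wK u v; rewrite w_adj wK. Qed.

Section TwistedAdjoint.
Variable R : realType.
Local Notation C := R[i].
Variables (H : lmodType C) (ip : H -> H -> C).
Hypothesis ip_inner : is_inner_product ip.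
Variables (omega omega' x xbar : H -> H).
Hypotheses (omega_adj : is_adjoint ip omega omega')
  (omegaK : cancel omega omega') (omega'K : cancel omega' omega)
  (xbar_adj : is_adjoint ip x xbar).

Lemma twisted_hermitian_Im0 :
  (forall u, omega (xbar (omega u)) = x u) ->
  forall u, complex.Im (ip (x u) (omega u)) = 0.
Proof.
case: ip_inner => _ ip_sym _ _ herm u.
have : ip (x u) (omega u) = (ip (x u) (omega u))^*.
  by rewrite -{1}herm omega_adj omegaK ip_sym -xbar_adj.
by case: (ip _ _) => a b /= [] ?; lra.
Qed.

Lemma Im0_twisted_hermitian :
  is_linear x -> is_linear omega ->
  (forall u, complex.Im (ip (x u) (omega u)) = 0) ->
  forall u, omega (xbar (omega u)) = x u.
Proof.
case: ip_inner => ipDl ip_sym _ _ x_lin omega_lin real_diag v.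
pose B u v := ip (x u) (omega v).
have B_herm : forall u v, B u v = (B v u)^*.
  apply: sesquilinear_hermitian => // [a u u' w | a u w w'].
    by rewrite /B x_lin ipDl.
  by rewrite /B omega_lin ipDr.
suff -> : xbar (omega v) = omega' (x v) by rewrite omega'K.
by apply: (ip_injr ip_inner) => u; rewrite -xbar_adj -/(B u v) B_herm -ip_sym omega_adj.
Qed.

Lemma opnorm_sub_iscaleP (t : R) :
  opnorm_le ip (fun u => x u - (Complex 0 1 * t%:C) *: omega u)
    (Num.sqrt (1 + t ^+ 2)) <->
  forall u, complex.Re (ip (x u) (x u)) - 2 * t * complex.Im (ip (x u) (omega u))
            <= complex.Re (ip u u).
Proof.
have c_ge0 : 0 <= 1 + t ^+ 2 by rewrite addr_ge0 // sqr_ge0.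
have omega_iso := adjoint_cancel_isometry omega_adj omegaK.
split=> bound u; have := bound u;
  rewrite normH_le_sqrt // Re_ip_sub_iscale // omega_iso; lra.
Qed.

End TwistedAdjoint.

Theorem lemma2 (R : realType) (H : lmodType R[i]) (ip : H -> H -> R[i])
  (hH : is_hilbert ip)
  (eps : H -> H) (heps : is_grading ip eps)
  (omega : H -> H) (homega_alg : in_Cstar_1_eps eps omega)
  (homega_u : is_unitary_op ip omega)
  (x : H -> H) (hx : is_bounded ip x)
  (xbar : H -> H) (hxbar : is_adjoint ip x xbar) :
  ((forall u : H, omega (xbar (omega u)) = x u) /\ opnorm_le ip x 1) <->
  (forall t : R,
     opnorm_le ip (fun u : H => x u - (Complex 0 1 * t%:C) *: omega u)
       (Num.sqrt (1 + t ^+ 2))).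
Proof.
case: hH => ip_inner _; case: hx => x_lin _.
case: homega_u => [[omega_lin _] [omega' [omega_adj omega'K omegaK]]].
split=> [[herm /(opnorm_le1P ip_inner) x_contr] t | bound].
  apply/(opnorm_sub_iscaleP ip_inner x omega_adj omegaK) => u.
  by rewrite (twisted_hermitian_Im0 ip_inner omega_adj omegaK hxbar herm) mulr0 subr0 x_contr.
have bound_t t := (opnorm_sub_iscaleP ip_inner x omega_adj omegaK t).1 (bound t).
have real_diag u := affine_bounded_slope0 (bound_t^~ u).
split; last first.
  by apply/(opnorm_le1P ip_inner) => u; have := bound_t 0 u; rewrite real_diag mulr0 subr0.
exact: (Im0_twisted_hermitian ip_inner omega_adj omega'K hxbar x_lin omega_lin real_diag).
Qed.
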